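(* The divisor class $D=5H-2\sum_{i=0}^5E_i-2(E_{02}+E_{03}+E_{12}+E_{13})$ on $X$ is movable, i.e. the base locus of $|D|$ contains no divisor.
   Context: Let $p_0,\dots,p_5\in\mathbb{P}^3$ be six very general points, $l_{ij}=\overline{p_ip_j}$ ($0\le i<j\le5$), and $X$ the blow-up of $\mathbb{P}^3$ at the $p_i$ followed by the blow-up of the strict transforms of the 15 lines. $\mathrm{Pic}(X)$ has basis $H$ (pullback of a plane), $E_i$ (exceptional over $p_i$), $E_{ij}$ (exceptional over $l_{ij}$). *)

(* mathcomp + multinomials (mpoly) + real-closed (complex) +
   mathcomp-analysis' reals (realType).  The ground field is C, modelled as
   R[i] = complex R for an arbitrary R : realType. *)
From HB Require Import structures.
From mathcomp Require Import all_boot all_order all_algebra.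
From mathcomp Require Import reals complex.
From mathcomp Require Import mpoly.

Set Implicit Arguments.
Unset Strict Implicit.
Unset Printing Implicit Defensive.

Import GRing.Theory.
Local Open Scope ring_scope.

(* Homogeneous coordinates on P^3 : vectors in K^4 (variables 'X_0..'X_3). *)

(* The hypersurface V(f) (f homogeneous) has multiplicity >= m at the point
   [a] of P^3 (a <> 0): all partial derivatives of f of order < m vanish at a. *)
Definition pt_mult_ge (K : fieldType) (f : {mpoly K[4]}) (a : 'I_4 -> K)
    (m : nat) : Prop :=
  forall mm : 'X_{1..4}, (mdeg mm < m)%N -> (f^`M[mm]).@[a] = 0.

Definition line_mult_ge (K : fieldType) (f : {mpoly K[4]}) (a b : 'I_4 -> K)
    (m : nat) : Prop :=
  forall s t : K, pt_mult_ge f (fun k => s * a k + t * b k) m.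

(* Coefficient of E_ij in -D : the prescribed multiplicity along l_ij
   (2 for l_02, l_03, l_12, l_13, and 0 for the other lines), for i < j. *)
Definition dline (i j : 'I_6) : nat :=
  if ((i == 0 :> nat) || (i == 1 :> nat)) && ((j == 2 :> nat) || (j == 3 :> nat))
  then 2 else 0.

(* Nonzero elements of H^0(X, D), D = 5H - 2 sum E_i - 2(E02+E03+E12+E13):
   nonzero quintic forms with multiplicity >= 2 at each p_i and >= dline i j
   along each l_ij.  (The members of |D| are the divisors of these forms.) *)
Definition in_linsys (K : fieldType) (p : 'I_6 -> 'I_4 -> K)
    (f : {mpoly K[4]}) : Prop :=
  [/\ f != 0, f \is 5.-homog,
      forall i, pt_mult_ge f (p i) 2
    & forall i j : 'I_6, (i < j)%N -> line_mult_ge f (p i) (p j) (dline i j)].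

Definition mirreducible (K : fieldType) (g : {mpoly K[4]}) : Prop :=
  (1 < msize g)%N /\
  forall a b : {mpoly K[4]}, g = a * b -> (msize a <= 1)%N \/ (msize b <= 1)%N.

(* Prime divisors of X: strict transforms of irreducible surfaces V(g) of P^3,
   the exceptional divisors E_i, and the exceptional divisors E_ij (i<j). *)
Inductive prime_div (K : fieldType) :=
  | PStrict of {mpoly K[4]}
  | PExcPt of 'I_6
  | PExcLine of 'I_6 & 'I_6.

Definition is_prime_div (K : fieldType) (G : prime_div K) : Prop :=
  match G with
  | PStrict g => mirreducible g /\ exists d, g \is d.-homog
  | PExcPt _ => True
  | PExcLine i j => (i < j)%N
  end.

(* The member of |D| defined by f is
     f~ + sum_i (mult_{p_i} f - 2) E_i + sum_{i<j} (mult_{l_ij} f - dline i j) E_ij;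
   [in_member p f G] says that the prime divisor G lies in its support. *)
Definition in_member (K : fieldType) (p : 'I_6 -> 'I_4 -> K)
    (f : {mpoly K[4]}) (G : prime_div K) : Prop :=
  match G with
  | PStrict g => exists h, f = g * h
  | PExcPt i => pt_mult_ge f (p i) 3
  | PExcLine i j => line_mult_ge f (p i) (p j) (dline i j).+1
  end.

(* D is movable: no prime divisor lies in the base locus of |D|
   (i.e. in the support of every member).  If |D| is empty this is false. *)
Definition movable (K : fieldType) (p : 'I_6 -> 'I_4 -> K) : Prop :=
  forall G : prime_div K, is_prime_div G ->
    ~ (forall f, in_linsys p f -> in_member p f G).

Definition coords (K : fieldType) (p : 'I_6 -> 'I_4 -> K) : 'I_24 -> K :=
  fun k => p (inord (k %/ 4)) (inord (k %% 4)).

(* Write H_abc for the plane through p_a, p_b, p_c, Q4 and Q5 for the quadrics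
   through p_4 and p_5 of the pencil spanned by H_012 H_013 and H_023 H_123
   (they contain l_02, l_03, l_12, l_13), Q' for the quadric through p_4 of the
   pencil spanned by H_013 H_125 and H_123 H_035, and La, Lb for the planes
   through l_45 and the coordinate points [1:0:0:0], [0:1:0:0].  The quintics
     F1 = Q4 Q5 La,   F2 = Q4 Q5 Lb,   F3 = Q4 H_025 Q',   F4 = Q5 H_024 Q'
   lie in |D|: at every p_i and along l_02, l_03, l_12, l_13 two of their three
   factors vanish.  No prime divisor is a fixed component:
   - F1 or F2 has multiplicity exactly 2 at each p_i, and F1 exactly 2 along the
     four lines, since a second x0-derivative does not vanish;
   - F1 (F3 for l_45) does not vanish at the midpoint of every other line;
   - every surface meets the line x2 = x3 = 0, on which the four members have
     no common zero, by resultants of their factors.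
   These nonvanishing statements are polynomial conditions on the 24
   coordinates; the polynomials are nonzero since they do not vanish at an
   explicit integer configuration. *)

From HB Require Import structures.
From mathcomp Require Import all_boot all_order all_algebra.
From mathcomp Require Import reals complex.
From mathcomp Require Import mpoly.
From mathcomp Require Import zify ring.
From mathcomp Require boolp.
Set Implicit Arguments.
Unset Strict Implicit.
Unset Printing Implicit Defensive.
Import GRing.Theory Num.Theory.
Local Open Scope ring_scope.

Definition ord4 (n : nat) : 'I_4 :=
  match n with
  | 0 => @Ordinal 4 0 isT | 1 => @Ordinal 4 1 isT
  | 2 => @Ordinal 4 2 isT | _ => @Ordinal 4 3 isT
  end.

Definition ord6 (n : nat) : 'I_6 :=
  match n with
  | 0 => @Ordinal 6 0 isT | 1 => @Ordinal 6 1 isT | 2 => @Ordinal 6 2 isT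
  | 3 => @Ordinal 6 3 isT | 4 => @Ordinal 6 4 isT | _ => @Ordinal 6 5 isT
  end.

Lemma ord6_ind (P : 'I_6 -> Prop) :
  P (ord6 0) -> P (ord6 1) -> P (ord6 2) -> P (ord6 3) -> P (ord6 4) -> P (ord6 5) ->
  forall i, P i.
Proof.
move=> P0 P1 P2 P3 P4 P5 [[|[|[|[|[|[|k]]]]]] lt_k6] //.
- by rewrite (_ : Ordinal _ = ord6 0) //; apply: val_inj.
- by rewrite (_ : Ordinal _ = ord6 1) //; apply: val_inj.
- by rewrite (_ : Ordinal _ = ord6 2) //; apply: val_inj.
- by rewrite (_ : Ordinal _ = ord6 3) //; apply: val_inj.
- by rewrite (_ : Ordinal _ = ord6 4) //; apply: val_inj.
- by rewrite (_ : Ordinal _ = ord6 5) //; apply: val_inj.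
Qed.

Lemma mem_mkseq_ord6 i : i \in mkseq ord6 6.
Proof. by move: i; apply: ord6_ind. Qed.

(** * Planes and quadrics *)

Section Forms.
Variable K : comPzRingType.
Implicit Types (a b c l x y : 'I_4 -> K) (s t : K).

Definition dot c x : K :=
  c (ord4 0) * x (ord4 0) + c (ord4 1) * x (ord4 1)
  + c (ord4 2) * x (ord4 2) + c (ord4 3) * x (ord4 3).

Definition minor3 a b c (i j k : 'I_4) : K :=
  a i * (b j * c k - b k * c j) - a j * (b i * c k - b k * c i)
  + a k * (b i * c j - b j * c i).

(* The coefficients of the plane through [a], [b], [c]: [dot (plane3 a b c) x]
   is, up to sign, the determinant with rows [x], [a], [b], [c]. *)
Definition plane3 a b c (k : 'I_4) : K :=
  match val k with
  | 0 => - minor3 a b c (ord4 1) (ord4 2) (ord4 3)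
  | 1 => minor3 a b c (ord4 0) (ord4 2) (ord4 3)
  | 2 => - minor3 a b c (ord4 0) (ord4 1) (ord4 3)
  | _ => minor3 a b c (ord4 0) (ord4 1) (ord4 2)
  end.

Definition lcomb s t a b (k : 'I_4) : K := s * a k + t * b k.

Definition line01 s t (k : 'I_4) : K :=
  match val k with 0 => s | 1 => t | _ => 0 end.

Lemma dot_plane3_l a b c : dot (plane3 a b c) a = 0.
Proof. by rewrite /dot /plane3 /minor3 /=; ring. Qed.
Lemma dot_plane3_m a b c : dot (plane3 a b c) b = 0.
Proof. by rewrite /dot /plane3 /minor3 /=; ring. Qed.
Lemma dot_plane3_r a b c : dot (plane3 a b c) c = 0.
Proof. by rewrite /dot /plane3 /minor3 /=; ring. Qed.
Lemma dot_plane3_lm a b c s t : dot (plane3 a b c) (lcomb s t a b) = 0.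
Proof. by rewrite /dot /plane3 /minor3 /lcomb /=; ring. Qed.
Lemma dot_plane3_lr a b c s t : dot (plane3 a b c) (lcomb s t a c) = 0.
Proof. by rewrite /dot /plane3 /minor3 /lcomb /=; ring. Qed.
Lemma dot_plane3_mr a b c s t : dot (plane3 a b c) (lcomb s t b c) = 0.
Proof. by rewrite /dot /plane3 /minor3 /lcomb /=; ring. Qed.

Lemma dot_line01 c s t : dot c (line01 s t) = c (ord4 0) * s + c (ord4 1) * t.
Proof. by rewrite /dot /line01 /=; ring. Qed.

(* [Quad y l1 l2 l3 l4] is the quadric through [y] of the pencil spanned by
   the plane pairs [l1 l2] and [l3 l4]. *)
Record quad := Quad { qpt : 'I_4 -> K; ql1 : 'I_4 -> K; ql2 : 'I_4 -> K;
                                       ql3 : 'I_4 -> K; ql4 : 'I_4 -> K }.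

Definition qval q x : K :=
  dot (ql3 q) (qpt q) * dot (ql4 q) (qpt q) * (dot (ql1 q) x * dot (ql2 q) x)
  - dot (ql1 q) (qpt q) * dot (ql2 q) (qpt q) * (dot (ql3 q) x * dot (ql4 q) x).

Definition qderiv0 q x : K :=
  dot (ql3 q) (qpt q) * dot (ql4 q) (qpt q)
    * (ql1 q (ord4 0) * dot (ql2 q) x + dot (ql1 q) x * ql2 q (ord4 0))
  - dot (ql1 q) (qpt q) * dot (ql2 q) (qpt q)
    * (ql3 q (ord4 0) * dot (ql4 q) x + dot (ql3 q) x * ql4 q (ord4 0)).

Lemma qval_Quad_pt y l1 l2 l3 l4 : qval (Quad y l1 l2 l3 l4) y = 0.
Proof. by rewrite /qval /=; ring. Qed.

Lemma qval_Quad_eq0 y l1 l2 l3 l4 x :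
  dot l1 x = 0 \/ dot l2 x = 0 -> dot l3 x = 0 \/ dot l4 x = 0 ->
  qval (Quad y l1 l2 l3 l4) x = 0.
Proof. by rewrite /qval /= => -[|] -> [|] ->; rewrite ?(mulr0, mul0r, subrr). Qed.

Definition binq (c0 c1 c2 s t : K) : K := c0 * (s * s) + c1 * (s * t) + c2 * (t * t).

Definition qcoef0 q := qval q (line01 1 0).
Definition qcoef2 q := qval q (line01 0 1).
Definition qcoef1 q := qval q (line01 1 1) - qcoef0 q - qcoef2 q.

Lemma qval_line01 q s t : qval q (line01 s t) = binq (qcoef0 q) (qcoef1 q) (qcoef2 q) s t.
Proof. by rewrite /binq /qcoef1 /qcoef0 /qcoef2 /qval !dot_line01; ring. Qed.

Definition resultant22 (c0 c1 c2 d0 d1 d2 : K) : K :=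
  (c2 * d0 - c0 * d2) ^+ 2 + (c1 * d0 - c0 * d1) * (c1 * d2 - c2 * d1).

Definition resultant21 (c0 c1 c2 b0 b1 : K) : K :=
  c0 * b1 ^+ 2 - c1 * b0 * b1 + c2 * b0 ^+ 2.

Definition qres22 q q' : K :=
  resultant22 (qcoef0 q) (qcoef1 q) (qcoef2 q) (qcoef0 q') (qcoef1 q') (qcoef2 q').

Definition qres21 q l : K :=
  resultant21 (qcoef0 q) (qcoef1 q) (qcoef2 q) (l (ord4 0)) (l (ord4 1)).

End Forms.

Section Resultants.
Variable F : fieldType.

Lemma resultant22_eq0 (c0 c1 c2 d0 d1 d2 s t : F) :
  binq c0 c1 c2 s t = 0 -> binq d0 d1 d2 s t = 0 -> (s != 0) || (t != 0) ->
  resultant22 c0 c1 c2 d0 d1 d2 = 0.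
Proof.
rewrite /binq => Hc Hd st.
have sq0 (x y : F) : x * (y * y) = 0 -> y != 0 -> x = 0.
  by move=> /eqP; rewrite !mulf_eq0 orbb => /orP[/eqP //|/eqP ->]; rewrite eqxx.
have : resultant22 c0 c1 c2 d0 d1 d2 * (s * s * t) =
  (c1 * d2 - c2 * d1) * s * (d0 * (c0 * (s * s) + c1 * (s * t) + c2 * (t * t))
       - c0 * (d0 * (s * s) + d1 * (s * t) + d2 * (t * t)))
  - (c2 * d0 - c0 * d2) * t * (d2 * (c0 * (s * s) + c1 * (s * t) + c2 * (t * t))
       - c2 * (d0 * (s * s) + d1 * (s * t) + d2 * (t * t))).
  by rewrite /resultant22; ring.
rewrite Hc Hd !(mulr0, subrr) => /eqP; rewrite !mulf_eq0 orbb.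
case/orP => [/eqP -> //|/orP[] /eqP st0].
- move: st Hc Hd; rewrite st0 eqxx /= !(mul0r, mulr0, add0r) => t0 Hc Hd.
  by rewrite /resultant22 (sq0 _ _ Hc t0) (sq0 _ _ Hd t0); ring.
- move: st Hc Hd; rewrite st0 eqxx orbF !(mul0r, mulr0, addr0) => s0 Hc Hd.
  by rewrite /resultant22 (sq0 _ _ Hc s0) (sq0 _ _ Hd s0); ring.
Qed.

Lemma resultant21_eq0 (c0 c1 c2 b0 b1 s t : F) :
  binq c0 c1 c2 s t = 0 -> b0 * s + b1 * t = 0 -> (s != 0) || (t != 0) ->
  resultant21 c0 c1 c2 b0 b1 = 0.
Proof.
rewrite /binq => Hc Hb st.
have Es : resultant21 c0 c1 c2 b0 b1 * (s * s) =
  b1 * b1 * (c0 * (s * s) + c1 * (s * t) + c2 * (t * t))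
  + (b0 * s + b1 * t) * (- c1 * b1 * s + c2 * (b0 * s - b1 * t)).
  by rewrite /resultant21; ring.
have Et : resultant21 c0 c1 c2 b0 b1 * (t * t) =
  b0 * b0 * (c0 * (s * s) + c1 * (s * t) + c2 * (t * t))
  + (b0 * s + b1 * t) * (c0 * (b1 * t - b0 * s) - c1 * b0 * t).
  by rewrite /resultant21; ring.
move: Es Et; rewrite Hc Hb !(mulr0, mul0r, addr0) => /eqP + /eqP.
rewrite !mulf_eq0 !orbb.
by case/orP: st => /negbTE ->; rewrite orbF; [move=> /eqP | move=> _ /eqP].
Qed.

End Resultants.

(** * The configuration *)

Definition ord6_pairs : seq ('I_6 * 'I_6) :=
  [seq ij <- [seq (i, j) | i <- mkseq ord6 6, j <- mkseq ord6 6]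
     | (val ij.1 < val ij.2)%N].

Section Configuration.
Variables (K : comPzRingType) (p : 'I_6 -> 'I_4 -> K).
Local Notation pt n := (p (ord6 n)).

Definition plane (a b c : nat) := plane3 (pt a) (pt b) (pt c).

Definition pencil_quad y : quad K :=
  Quad y (plane 0 1 2) (plane 0 1 3) (plane 0 2 3) (plane 1 2 3).
Definition Q4 := pencil_quad (pt 4).
Definition Q5 := pencil_quad (pt 5).
Definition Q' := Quad (pt 4) (plane 0 1 3) (plane 1 2 5) (plane 1 2 3) (plane 0 3 5).
Definition La := plane3 (pt 4) (pt 5) (line01 1 0).
Definition Lb := plane3 (pt 4) (pt 5) (line01 0 1).

Definition F1val x := qval Q4 x * qval Q5 x * dot La x.
Definition F2val x := qval Q4 x * qval Q5 x * dot Lb x.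
Definition F3val x := qval Q4 x * dot (plane 0 2 5) x * qval Q' x.
Definition F4val x := qval Q5 x * dot (plane 0 2 4) x * qval Q' x.

Definition midpoint (i j : 'I_6) := lcomb 1 1 (p i) (p j).

(* Half of the second x0-derivative of F1 at a common zero of Q4 and Q5. *)
Definition F1hess x := qderiv0 Q4 x * qderiv0 Q5 x * dot La x.

(* F1 (F2 at p_4, p_5) has multiplicity exactly 2 at p_i. *)
Definition pt_cond (i : 'I_6) : K :=
  if (i < 4)%N then F1hess (p i)
  else if i == ord6 4 then qderiv0 Q4 (p i) * Lb (ord4 0) * qval Q5 (p i)
  else qderiv0 Q5 (p i) * Lb (ord4 0) * qval Q4 (p i).

(* F1 has multiplicity exactly 2 along l_02, l_03, l_12, l_13, and F1 (F3 along
   l_45) does not vanish at the midpoint of the other lines. *)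
Definition line_cond (i j : 'I_6) : K :=
  if dline i j == 2 then F1hess (midpoint i j)
  else if (val i, val j) == (4, 5)%N then F3val (midpoint i j)
  else F1val (midpoint i j).

Record generic : Prop := Generic {
  pt_cond_neq0 : forall i, pt_cond i != 0;
  line_cond_neq0 : forall i j : 'I_6, (i < j)%N -> line_cond i j != 0;
  F2_neq0 : F2val (midpoint (ord6 0) (ord6 1)) != 0;
  F3_neq0 : F3val (midpoint (ord6 0) (ord6 1)) != 0;
  F4_neq0 : F4val (midpoint (ord6 0) (ord6 1)) != 0;
  La1_neq0 : La (ord4 1) != 0;
  Lb0_neq0 : Lb (ord4 0) != 0;
  qres_Q4_Q5 : qres22 Q4 Q5 != 0;
  qres_Q4_H024 : qres21 Q4 (plane 0 2 4) != 0;
  qres_Q4_Q' : qres22 Q4 Q' != 0;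
  qres_Q5_H025 : qres21 Q5 (plane 0 2 5) != 0;
  qres_Q5_Q' : qres22 Q5 Q' != 0 }.

Definition gen_conds : seq K :=
  [:: F2val (midpoint (ord6 0) (ord6 1)); F3val (midpoint (ord6 0) (ord6 1));
      F4val (midpoint (ord6 0) (ord6 1)); La (ord4 1); Lb (ord4 0);
      qres22 Q4 Q5; qres21 Q4 (plane 0 2 4); qres22 Q4 Q';
      qres21 Q5 (plane 0 2 5); qres22 Q5 Q']
  ++ [seq pt_cond i | i <- mkseq ord6 6]
  ++ [seq line_cond ij.1 ij.2 | ij <- ord6_pairs].

Lemma generic_gen_conds : all (fun y => y != 0) gen_conds -> generic.
Proof.
rewrite !all_cat => /and3P[+ /allP pt_nz /allP line_nz].
move=> /and5P[nF2 nF3 nF4 nLa /and5P[nLb r45 r4 r4' /andP[r5 /andP[r5' _]]]].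
split=> // [i | i j lt_ij]; first exact/pt_nz/map_f/mem_mkseq_ord6.
apply: (line_nz _ (map_f _ (x := (i, j)) _)).
by rewrite mem_filter lt_ij allpairs_f ?mem_mkseq_ord6.
Qed.

Lemma F1_neq0 : generic -> F1val (midpoint (ord6 0) (ord6 1)) != 0.
Proof. by move=> gen; exact: (line_cond_neq0 gen (i := ord6 0) (j := ord6 1)). Qed.

End Configuration.

Section Morphism.
Variables (K K' : comPzRingType) (phi : {rmorphism K -> K'}).
Local Notation mp x := (fun k => phi (x k)).
Implicit Types (a b c x : 'I_4 -> K) (s t : K).

Lemma rmorph_dot c x : phi (dot c x) = dot (mp c) (mp x).
Proof. by rewrite /dot !(rmorphD, rmorphM). Qed.

Lemma rmorph_plane3 a b c : mp (plane3 a b c) = plane3 (mp a) (mp b) (mp c).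
Proof.
apply: boolp.funext => -[[|[|[|[|k]]]] lt_k4];
  by rewrite /plane3 /minor3 /= ?rmorphN !(rmorphB, rmorphD, rmorphM).
Qed.

Lemma rmorph_lcomb s t a b : mp (lcomb s t a b) = lcomb (phi s) (phi t) (mp a) (mp b).
Proof. by apply: boolp.funext => k; rewrite /lcomb !(rmorphD, rmorphM). Qed.

Lemma rmorph_line01 s t : mp (line01 s t) = line01 (phi s) (phi t).
Proof.
by apply: boolp.funext => -[[|[|[|[|k]]]] lt_k4]; rewrite /line01 /= ?rmorph0.
Qed.

Definition map_quad (q : quad K) : quad K' :=
  Quad (mp (qpt q)) (mp (ql1 q)) (mp (ql2 q)) (mp (ql3 q)) (mp (ql4 q)).

Lemma rmorph_qval q x : phi (qval q x) = qval (map_quad q) (mp x).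
Proof. by rewrite /qval !(rmorph_dot, rmorphB, rmorphM). Qed.

Lemma rmorph_qderiv0 q x : phi (qderiv0 q x) = qderiv0 (map_quad q) (mp x).
Proof. by rewrite /qderiv0 !(rmorph_dot, rmorphB, rmorphM, rmorphD). Qed.

Lemma rmorph_qcoef q :
  [/\ phi (qcoef0 q) = qcoef0 (map_quad q), phi (qcoef1 q) = qcoef1 (map_quad q)
    & phi (qcoef2 q) = qcoef2 (map_quad q)].
Proof.
by rewrite /qcoef1 /qcoef0 /qcoef2 !(rmorph_qval, rmorphB) !rmorph_line01 rmorph1 rmorph0.
Qed.

Lemma rmorph_qres22 q q' : phi (qres22 q q') = qres22 (map_quad q) (map_quad q').
Proof.
have [c0 c1 c2] := rmorph_qcoef q; have [d0 d1 d2] := rmorph_qcoef q'.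
rewrite /qres22 /resultant22.
by rewrite !(c0, c1, c2, d0, d1, d2, rmorphD, rmorphN, rmorphM, rmorphXn).
Qed.

Lemma rmorph_qres21 q l : phi (qres21 q l) = qres21 (map_quad q) (mp l).
Proof.
have [c0 c1 c2] := rmorph_qcoef q.
by rewrite /qres21 /resultant21 !(c0, c1, c2, rmorphD, rmorphN, rmorphM, rmorphXn).
Qed.

Variable p : 'I_6 -> 'I_4 -> K.
Local Notation p' := (fun i k => phi (p i k)).

Lemma rmorph_plane (a b c : nat) : mp (plane p a b c) = plane p' a b c.
Proof. exact: rmorph_plane3. Qed.

Lemma map_quad_Q4 : map_quad (Q4 p) = Q4 p'.
Proof. by rewrite /map_quad /= !rmorph_plane. Qed.
Lemma map_quad_Q5 : map_quad (Q5 p) = Q5 p'.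
Proof. by rewrite /map_quad /= !rmorph_plane. Qed.
Lemma map_quad_Q' : map_quad (Q' p) = Q' p'.
Proof. by rewrite /map_quad /= !rmorph_plane. Qed.

Lemma rmorph_La : mp (La p) = La p'.
Proof. by rewrite /La rmorph_plane3 rmorph_line01 rmorph1 rmorph0. Qed.
Lemma rmorph_Lb : mp (Lb p) = Lb p'.
Proof. by rewrite /Lb rmorph_plane3 rmorph_line01 rmorph1 rmorph0. Qed.

Lemma rmorph_midpoint i j : mp (midpoint p i j) = midpoint p' i j.
Proof. by rewrite /midpoint rmorph_lcomb rmorph1. Qed.

Let rmorph_conf :=
  (rmorphM, rmorph_qval, rmorph_qderiv0, rmorph_dot, rmorph_plane, rmorph_midpoint,
   map_quad_Q4, map_quad_Q5, map_quad_Q', rmorph_qres22, rmorph_qres21).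

Lemma rmorph_F1hess x : phi (F1hess p x) = F1hess p' (mp x).
Proof. by rewrite /F1hess !rmorph_conf rmorph_La. Qed.

Lemma rmorph_pt_cond i : phi (pt_cond p i) = pt_cond p' i.
Proof.
rewrite /pt_cond; case: ifP => _; first exact: rmorph_F1hess.
by case: ifP => _; rewrite !rmorph_conf -rmorph_Lb.
Qed.

Lemma rmorph_line_cond i j : phi (line_cond p i j) = line_cond p' i j.
Proof.
rewrite /line_cond; case: ifP => _; first by rewrite rmorph_F1hess rmorph_midpoint.
by case: ifP => _; rewrite /F1val /F3val !rmorph_conf ?rmorph_La.
Qed.

Lemma map_gen_conds : map phi (gen_conds p) = gen_conds p'.
Proof.
rewrite /gen_conds !map_cat -!map_comp; congr (_ ++ _ ++ _).
- by rewrite /= /F2val /F3val /F4val !rmorph_conf -rmorph_La -rmorph_Lb.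
- by apply: eq_map => i; exact: rmorph_pt_cond.
- by apply: eq_map => ij; exact: rmorph_line_cond.
Qed.

End Morphism.

Lemma rmorph_nth (K K' : comPzRingType) (phi : {rmorphism K -> K'}) (s : seq K) k :
  phi (nth 1 s k) = nth 1 (map phi s) k.
Proof.
have [lt_ks | ge_ks] := ltnP k (size s); first by rewrite (nth_map 1).
by rewrite !nth_default ?size_map // rmorph1.
Qed.

(** * Multiplicities *)

Section Multiplicity.
Variable F : fieldType.
Implicit Types (f g h : {mpoly F[4]}) (a : 'I_4 -> F).

Lemma pt_mult_ge0 f a : pt_mult_ge f a 0.
Proof. by []. Qed.

Lemma pt_mult_ge_le f a m n : (m <= n)%N -> pt_mult_ge f a n -> pt_mult_ge f a m.
Proof. by move=> le_mn H mm lt_m; apply: H; apply: leq_trans le_mn. Qed.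

Lemma pt_mult_ge_meval f a m : pt_mult_ge f a m.+1 -> f.@[a] = 0.
Proof. by move/(_ 0%MM); rewrite mderivm0m mdeg0; apply. Qed.

Lemma pt_mult_ge_deriv f a m i : pt_mult_ge f a m.+1 -> pt_mult_ge f^`M(i) a m.
Proof.
move=> H mm lt_m; rewrite -mderivmU1m -mderivmDm; apply: H.
by rewrite mdegD mdeg1 add1n ltnS.
Qed.

Lemma pt_mult_geS f a m : f.@[a] = 0 -> (forall i, pt_mult_ge f^`M(i) a m) ->
  pt_mult_ge f a m.+1.
Proof.
move=> f0 H mm; have [->|mm_neq0] := eqVneq mm 0%MM; first by rewrite mderivm0m.
have [i mi_neq0] : exists i, mm i != 0%N.
  apply/existsP; apply: contraR mm_neq0 => /existsPn mm0; apply/eqP/mnmP => j.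
  by rewrite mnm0E; apply/eqP; move: (mm0 j); rewrite negbK.
have -> : mm = (U_(i) + (mm - U_(i)))%MM by rewrite addmC submK // lep1mP.
by rewrite mdegD mdeg1 add1n ltnS mderivmDm mderivmU1m; apply: H.
Qed.

Lemma pt_mult_ge1 f a : f.@[a] = 0 -> pt_mult_ge f a 1.
Proof. by move=> f0; apply: pt_mult_geS. Qed.

Lemma pt_mult_geD f g a m :
  pt_mult_ge f a m -> pt_mult_ge g a m -> pt_mult_ge (f + g) a m.
Proof. by move=> Hf Hg mm lt_m; rewrite mderivmD mevalD Hf // Hg // addr0. Qed.

Lemma pt_mult_geM f g a m n :
  pt_mult_ge f a m -> pt_mult_ge g a n -> pt_mult_ge (f * g) a (m + n).
Proof.
have [k] := ubnP (m + n); elim: k => // k IH in m n f g *; rewrite ltnS => le_k.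
case: m n le_k => [|m] [|n] le_k Hf Hg //; rewrite ?add0n ?addn0 ?addSn.
all: apply: pt_mult_geS => [|i]; rewrite ?mevalM;
  [by rewrite ?(pt_mult_ge_meval Hf, mul0r) ?(pt_mult_ge_meval Hg, mulr0) |
   rewrite mderivM; apply: pt_mult_geD].
- rewrite -[n]add0n; apply: IH => //; exact: pt_mult_ge_le (leqnSn n) Hg.
- rewrite -[n]add0n; apply: IH => //; exact: pt_mult_ge_deriv Hg.
- rewrite -[m]addn0; apply: IH => //; exact: pt_mult_ge_deriv Hf.
- rewrite -[m]addn0; apply: IH => //; exact: pt_mult_ge_le (leqnSn m) Hf.
- by apply: IH => //; try lia; exact: pt_mult_ge_deriv Hf.
- by rewrite addnS -addSn; apply: IH => //; try lia; exact: pt_mult_ge_deriv Hg.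
Qed.

Definition two_vanish f g h a :=
  [\/ f.@[a] = 0 /\ g.@[a] = 0, f.@[a] = 0 /\ h.@[a] = 0 | g.@[a] = 0 /\ h.@[a] = 0].

Lemma pt_mult_ge2_prod3 f g h a : two_vanish f g h a -> pt_mult_ge (f * g * h) a 2.
Proof.
case=> -[X0 Y0].
- exact: pt_mult_geM (pt_mult_geM (pt_mult_ge1 X0) (pt_mult_ge1 Y0)) (pt_mult_ge0 h a).
- exact: pt_mult_geM (pt_mult_geM (pt_mult_ge1 X0) (pt_mult_ge0 g a)) (pt_mult_ge1 Y0).
- exact: pt_mult_geM (pt_mult_geM (pt_mult_ge0 f a) (pt_mult_ge1 X0)) (pt_mult_ge1 Y0).
Qed.

Lemma pt_mult_ge3_prod3 f g h a i : 2%:R != 0 :> F ->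
  f.@[a] = 0 -> g.@[a] = 0 -> pt_mult_ge (f * g * h) a 3 ->
  (f^`M(i)).@[a] * (g^`M(i)).@[a] * h.@[a] = 0.
Proof.
move=> two_neq0 f0 g0 /(_ (U_(i) + U_(i))%MM).
rewrite mdegD mdeg1 mderivmDm !mderivmU1m => /(_ isT) /eqP.
have -> : (((f * g * h)^`M(i))^`M(i)).@[a] =
          2%:R * ((f^`M(i)).@[a] * (g^`M(i)).@[a] * h.@[a]).
  rewrite !(mderivD, mderivM) !(mevalD, mevalM) f0 g0.
  by rewrite !(mul0r, mulr0, addr0, add0r); ring.
by rewrite mulf_eq0 (negbTE two_neq0) => /eqP.
Qed.

End Multiplicity.

(** * Four members of |D| *)

Section PolyForms.
Variable F : fieldType.
Implicit Types (c x : 'I_4 -> F) (q : quad F).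

Definition lform c : {mpoly F[4]} :=
  c (ord4 0) *: 'X_(ord4 0) + c (ord4 1) *: 'X_(ord4 1)
  + c (ord4 2) *: 'X_(ord4 2) + c (ord4 3) *: 'X_(ord4 3).

Definition qform q : {mpoly F[4]} :=
  (dot (ql3 q) (qpt q) * dot (ql4 q) (qpt q)) *: (lform (ql1 q) * lform (ql2 q))
  - (dot (ql1 q) (qpt q) * dot (ql2 q) (qpt q)) *: (lform (ql3 q) * lform (ql4 q)).

Lemma mderivXU (i j : 'I_4) : ('X_j : {mpoly F[4]})^`M(i) = (j == i)%:R%:MP.
Proof.
rewrite mderivX mnm1E; case: eqP => [->|_] /=; last by rewrite scale0r.
rewrite (_ : U_(i) - U_(i) = 0)%MM ?mpolyX0 ?scale1r //.
by apply/mnmP => k; rewrite !mnmE subnn.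
Qed.

Lemma meval_lform c x : (lform c).@[x] = dot c x.
Proof. by rewrite /lform !mevalD !mevalZ !mevalXU. Qed.

Lemma meval_lform_deriv0 c x : ((lform c)^`M(ord4 0)).@[x] = c (ord4 0).
Proof.
rewrite /lform !mderivD !mderivZ !mderivXU !mevalD !mevalZ !mevalC /=.
by rewrite !mulr0 !mulr1 !addr0.
Qed.

Lemma meval_qform q x : (qform q).@[x] = qval q x.
Proof. by rewrite /qform mevalB !mevalZ !mevalM !meval_lform. Qed.

Lemma meval_qform_deriv0 q x : ((qform q)^`M(ord4 0)).@[x] = qderiv0 q x.
Proof.
rewrite /qform mderivB !mderivZ !mderivM mevalB !mevalZ !mevalD !mevalM.
by rewrite !meval_lform !meval_lform_deriv0.
Qed.

Lemma lform_homog c : lform c \is 1.-homog.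
Proof.
have homX (i : 'I_4) (a : F) : a *: ('X_i : {mpoly F[4]}) \is 1.-homog.
  by apply: dhomogZ; rewrite dhomogX; exact/eqP/mdeg1.
by rewrite /lform !rpredD.
Qed.

Lemma qform_homog q : qform q \is 2.-homog.
Proof.
by rewrite /qform rpredB // dhomogZ // (dhomogM (lform_homog _) (lform_homog _)).
Qed.

Lemma qform2_lform_homog q q' c : qform q * qform q' * lform c \is 5.-homog.
Proof. exact: dhomogM (dhomogM (qform_homog _) (qform_homog _)) (lform_homog _). Qed.

Lemma qform_lform_qform_homog q c q' : qform q * lform c * qform q' \is 5.-homog.
Proof. exact: dhomogM (dhomogM (qform_homog _) (lform_homog _)) (qform_homog _). Qed.

End PolyForms.

Ltac plane_vanish :=
  match goal with
  | |- dot (plane3 ?a _ _) ?a = 0 => exact: dot_plane3_l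
  | |- dot (plane3 _ ?b _) ?b = 0 => exact: dot_plane3_m
  | |- dot (plane3 _ _ ?c) ?c = 0 => exact: dot_plane3_r
  | |- dot (plane3 ?a ?b _) (lcomb _ _ ?a ?b) = 0 => exact: dot_plane3_lm
  | |- dot (plane3 ?a _ ?c) (lcomb _ _ ?a ?c) = 0 => exact: dot_plane3_lr
  | |- dot (plane3 _ ?b ?c) (lcomb _ _ ?b ?c) = 0 => exact: dot_plane3_mr
  end.

Ltac factor_vanish :=
  match goal with
  | |- qval (Quad ?y _ _ _ _) ?y = 0 => exact: qval_Quad_pt
  | |- qval _ _ = 0 =>
      apply: qval_Quad_eq0; first [left; plane_vanish | right; plane_vanish]
  | |- dot _ _ = 0 => plane_vanish
  end.

Ltac solve_two_vanish :=
  rewrite /two_vanish !meval_qform !meval_lform /Q4 /Q5 /Q' /pencil_quad /La /Lb /plane;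
  first [ apply: Or31; split; factor_vanish | apply: Or32; split; factor_vanish
        | apply: Or33; split; factor_vanish ].

Section Members.
Variables (F : fieldType) (p : 'I_6 -> 'I_4 -> F).

Definition F1 := qform (Q4 p) * qform (Q5 p) * lform (La p).
Definition F2 := qform (Q4 p) * qform (Q5 p) * lform (Lb p).
Definition F3 := qform (Q4 p) * lform (plane p 0 2 5) * qform (Q' p).
Definition F4 := qform (Q5 p) * lform (plane p 0 2 4) * qform (Q' p).

Lemma meval_F1 x : F1.@[x] = F1val p x.
Proof. by rewrite !mevalM !meval_qform meval_lform. Qed.
Lemma meval_F2 x : F2.@[x] = F2val p x.
Proof. by rewrite !mevalM !meval_qform meval_lform. Qed.
Lemma meval_F3 x : F3.@[x] = F3val p x.
Proof. by rewrite !mevalM !meval_qform meval_lform. Qed.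
Lemma meval_F4 x : F4.@[x] = F4val p x.
Proof. by rewrite !mevalM !meval_qform meval_lform. Qed.

Lemma quad_lineP (i j : 'I_6) : (i < j)%N -> dline i j = 2 ->
  [\/ i = ord6 0 /\ j = ord6 2, i = ord6 0 /\ j = ord6 3,
      i = ord6 1 /\ j = ord6 2 | i = ord6 1 /\ j = ord6 3].
Proof.
move: i j; apply: ord6_ind; apply: ord6_ind; rewrite /dline //= => _ _.
all: by [apply: Or41 | apply: Or42 | apply: Or43 | apply: Or44].
Qed.

Lemma in_linsys_prod3 f g h :
  (exists x, (f * g * h).@[x] != 0) -> f * g * h \is 5.-homog ->
  (forall i, two_vanish f g h (p i)) ->
  (forall (i j : 'I_6) s t, (i < j)%N -> dline i j = 2 ->
     two_vanish f g h (lcomb s t (p i) (p j))) ->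
  in_linsys p (f * g * h).
Proof.
move=> [x nz] hom pts_vanish lines_vanish; split=> // [|i|i j lt_ij s t].
- by apply: contraNneq nz => ->; rewrite meval0.
- exact/pt_mult_ge2_prod3/pts_vanish.
- rewrite /dline; case: ifP => quad; last exact: pt_mult_ge0.
  by apply/pt_mult_ge2_prod3/lines_vanish; rewrite /dline ?quad.
Qed.

Ltac member_in_linsys homogeneous :=
  apply: in_linsys_prod3;
  [ exists (midpoint p (ord6 0) (ord6 1)); rewrite !mevalM !meval_qform !meval_lform
  | exact: homogeneous
  | by apply: ord6_ind; solve_two_vanish
  | by move=> i j s t lt_ij /(quad_lineP lt_ij) [] [-> ->]; solve_two_vanish ].

Hypothesis gen : generic p.

Lemma F1_in_linsys : in_linsys p F1.
Proof. by member_in_linsys qform2_lform_homog; exact: F1_neq0. Qed.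
Lemma F2_in_linsys : in_linsys p F2.
Proof. by member_in_linsys qform2_lform_homog; exact: F2_neq0. Qed.
Lemma F3_in_linsys : in_linsys p F3.
Proof. by member_in_linsys qform_lform_qform_homog; exact: F3_neq0. Qed.
Lemma F4_in_linsys : in_linsys p F4.
Proof. by member_in_linsys qform_lform_qform_homog; exact: F4_neq0. Qed.

End Members.

(** * Movability *)

Lemma poly_natS_roots_eq0 (R : numDomainType) (u : {poly R}) :
  (forall n, u.[n.+1%:R] = 0) -> u = 0.
Proof.
move=> u_natS; apply/eqP; apply: contraT => u_neq0.
have := max_poly_roots u_neq0 (rs := [seq n.+1%:R | n <- iota 0 (size u)]).
rewrite size_map size_iota ltnn; apply.
  by apply/allP => _ /mapP[n _ ->]; apply/rootP.
by rewrite map_inj_uniq ?iota_uniq // => m n /eqP; rewrite eqr_nat eqSS => /eqP.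
Qed.

Section ZeroOnLine.
Variable F : numClosedFieldType.
Implicit Types (g : {mpoly F[4]}) (x : 'I_4 -> F).

Lemma meval_mmap_horner g (h : 'I_4 -> {poly F}) t :
  (mmap (@polyC F) h g).[t] = g.@[fun k => (h k).[t]].
Proof.
rewrite /mmap mevalE horner_sum; apply: eq_bigr => m _.
rewrite hornerM hornerC /mmap1 horner_prod; congr (_ * _).
by apply: eq_bigr => i _; rewrite horner_exp.
Qed.

Lemma meval_homog_scale g d l x : g \is d.-homog ->
  g.@[fun k => l * x k] = l ^+ d * g.@[x].
Proof.
move=> g_hom; rewrite !mevalE mulr_sumr; apply: eq_big_seq => m m_supp.
have deg_m : mdeg m = d by have := dhomog_mf g_hom m_supp.
rewrite mulrCA; congr (_ * _).
under eq_bigr do rewrite exprMn.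
by rewrite big_split /= prodrXr -deg_m mdegE.
Qed.

Lemma horner_line01 (a b : {poly F}) t :
  (fun k => (line01 a b k).[t]) =1 line01 a.[t] b.[t].
Proof. by move=> [[|[|[|[|k]]]] lt_k4]; rewrite /line01 /= ?horner0. Qed.

Lemma homog_zero_line01 g d : g \is d.-homog -> (0 < d)%N ->
  exists s t, ((s != 0) || (t != 0)) /\ g.@[line01 s t] = 0.
Proof.
move=> g_hom d_gt0.
(* If g(1, t, 0, 0) is a nonzero constant c, homogeneity gives g(s, 1, 0, 0) = c s^d
   for s <> 0, hence also for s = 0. *)
pose u := mmap (@polyC F) (line01 1 'X) g.
have u_val t : u.[t] = g.@[line01 1 t].
  by rewrite meval_mmap_horner (meval_eq _ (horner_line01 _ _ _)) hornerC hornerX.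
have [/size_poly1P[c c_neq0 uC] | /closed_rootP[t /rootP ut0]] := boolP (size u == 1%N);
  last by exists 1, t; rewrite oner_neq0 -u_val.
pose w := mmap (@polyC F) (line01 'X 1) g - c *: 'X^d.
have w_val s : w.[s] = g.@[line01 s 1] - c * s ^+ d.
  rewrite hornerD hornerN hornerZ hornerXn meval_mmap_horner.
  by rewrite (meval_eq _ (horner_line01 _ _ _)) hornerC hornerX.
have w0 : w = 0.
  apply: poly_natS_roots_eq0 => n; rewrite w_val.
  have s_neq0 : n.+1%:R != 0 :> F by rewrite pnatr_eq0.
  have -> : g.@[line01 n.+1%:R 1] = g.@[fun k => n.+1%:R * line01 1 n.+1%:R^-1 k].
    by apply: meval_eq => -[[|[|[|[|k]]]] ?]; rewrite /line01 /= ?mulr1 ?mulr0 ?divff.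
  by rewrite (meval_homog_scale _ _ g_hom) -u_val uC hornerC mulrC subrr.
exists 0, 1; split; first by rewrite oner_neq0 orbT.
by move: (w_val 0); rewrite w0 horner0 expr0n gtn_eqF // mulr0 subr0.
Qed.

End ZeroOnLine.

Ltac quad_vanish := rewrite /midpoint /Q4 /Q5 /pencil_quad /plane; factor_vanish.

Section ExceptionalDivisors.
Variables (F : fieldType) (p : 'I_6 -> 'I_4 -> F).
Hypotheses (two_neq0 : 2%:R != 0 :> F) (gen : generic p).

Lemma F1hess_eq0 x : pt_mult_ge (F1 p) x 3 ->
  qval (Q4 p) x = 0 -> qval (Q5 p) x = 0 -> F1hess p x = 0.
Proof.
move=> F1x3 Q4x Q5x.
have := pt_mult_ge3_prod3 (ord4 0) two_neq0 _ _ F1x3.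
by rewrite !meval_qform => /(_ Q4x Q5x); rewrite !meval_qform_deriv0 meval_lform.
Qed.

Lemma pencil_quad_base y (i : 'I_6) : (i < 4)%N -> qval (pencil_quad p y) (p i) = 0.
Proof. by move: i; apply: ord6_ind => // _; quad_vanish. Qed.

Lemma pencil_quad_quad_line y (i j : 'I_6) s t : (i < j)%N -> dline i j = 2 ->
  qval (pencil_quad p y) (lcomb s t (p i) (p j)) = 0.
Proof. by move=> lt_ij /(quad_lineP lt_ij) [] [-> ->]; quad_vanish. Qed.

Lemma exc_pt_not_in_base_locus i :
  ~ (forall f, in_linsys p f -> in_member p f (PExcPt F i)).
Proof.
move=> base; apply/negP: (pt_cond_neq0 gen i); apply/negPn/eqP.
have F2_3 := base _ (F2_in_linsys gen); rewrite /pt_cond; case: ltnP => [lt_i4 | ge_i4].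
  by apply: F1hess_eq0; rewrite ?pencil_quad_base //; exact: base (F1_in_linsys gen).
move: i ge_i4 F2_3 {base}; apply: ord6_ind => // _ F2_3 /=.
- rewrite /F2 mulrAC in F2_3.
  have := pt_mult_ge3_prod3 (ord4 0) two_neq0 _ _ F2_3.
  rewrite meval_qform meval_lform => /(_ (qval_Quad_pt _ _ _ _ _) (dot_plane3_l _ _ _)).
  by rewrite meval_qform_deriv0 meval_lform_deriv0 meval_qform.
- rewrite /F2 [qform (Q4 p) * _]mulrC mulrAC in F2_3.
  have := pt_mult_ge3_prod3 (ord4 0) two_neq0 _ _ F2_3.
  rewrite meval_qform meval_lform => /(_ (qval_Quad_pt _ _ _ _ _) (dot_plane3_m _ _ _)).
  by rewrite meval_qform_deriv0 meval_lform_deriv0 meval_qform.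
Qed.

Lemma exc_line_not_in_base_locus (i j : 'I_6) : (i < j)%N ->
  ~ (forall f, in_linsys p f -> in_member p f (PExcLine F i j)).
Proof.
move=> lt_ij base; apply/negP: (line_cond_neq0 gen lt_ij); apply/negPn/eqP.
rewrite /line_cond; case: eqP => [dl2 | _].
  have F1_3 : pt_mult_ge (F1 p) (midpoint p i j) 3.
    by have := base _ (F1_in_linsys gen) 1 1; rewrite dl2.
  by apply: F1hess_eq0; rewrite ?pencil_quad_quad_line.
have mid0 f : in_linsys p f -> f.@[midpoint p i j] = 0.
  by move=> /base /(_ 1 1) /pt_mult_ge_meval.
by case: ifP => _; [rewrite -meval_F3 | rewrite -meval_F1];
  apply: mid0; [exact: F3_in_linsys | exact: F1_in_linsys].
Qed.

End ExceptionalDivisors.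

Lemma members_no_common_zero_line01 (F : fieldType) (p : 'I_6 -> 'I_4 -> F) s t :
  generic p -> (s != 0) || (t != 0) ->
  ~ [/\ F1val p (line01 s t) = 0, F2val p (line01 s t) = 0,
        F3val p (line01 s t) = 0 & F4val p (line01 s t) = 0].
Proof.
move=> gen st; set x := line01 s t.
have no_qq q q' : qres22 q q' != 0 -> qval q x = 0 -> qval q' x = 0 -> False.
  by move=> /eqP + qx q'x; apply; apply: resultant22_eq0 st; rewrite -qval_line01.
have no_ql q l : qres21 q l != 0 -> qval q x = 0 -> dot l x = 0 -> False.
  move=> /eqP + qx lx; apply; apply: resultant21_eq0 st.
  - by rewrite -qval_line01.
  - by rewrite -dot_line01.
rewrite /F1val /F2val /F3val /F4val => -[/eqP F1x /eqP F2x /eqP F3x /eqP F4x].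
have [Q4x | Q4x] := eqVneq (qval (Q4 p) x) 0.
  have Q5x : qval (Q5 p) x != 0 by apply/eqP; exact: no_qq (qres_Q4_Q5 gen) Q4x.
  move: F4x; rewrite !mulf_eq0 (negbTE Q5x) /= => /orP[] /eqP.
  - exact: no_ql (qres_Q4_H024 gen) Q4x.
  - exact: no_qq (qres_Q4_Q' gen) Q4x.
have [Q5x | Q5x] := eqVneq (qval (Q5 p) x) 0.
  move: F3x; rewrite !mulf_eq0 (negbTE Q4x) /= => /orP[] /eqP.
  - exact: no_ql (qres_Q5_H025 gen) Q5x.
  - exact: no_qq (qres_Q5_Q' gen) Q5x.
have La0 : La p (ord4 0) = 0.
  have := dot_plane3_r (p (ord6 4)) (p (ord6 5)) (line01 1 0).
  by rewrite dot_line01 mulr1 mulr0 addr0.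
have Lb1 : Lb p (ord4 1) = 0.
  have := dot_plane3_r (p (ord6 4)) (p (ord6 5)) (line01 0 1).
  by rewrite dot_line01 mulr1 mulr0 add0r.
move: F1x F2x; rewrite !mulf_eq0 (negbTE Q4x) (negbTE Q5x) /= !dot_line01 La0 Lb1.
rewrite mul0r add0r mul0r addr0 !mulf_eq0.
rewrite (negbTE (La1_neq0 gen)) (negbTE (Lb0_neq0 gen)) /=.
by move=> /eqP t0 /eqP s0; move: st; rewrite s0 t0 eqxx.
Qed.

Section Movable.
Variables (F : numClosedFieldType) (p : 'I_6 -> 'I_4 -> F).
Hypothesis gen : generic p.

Lemma strict_not_in_base_locus g : is_prime_div (PStrict g) ->
  ~ (forall f, in_linsys p f -> in_member p f (PStrict g)).
Proof.
move=> [[size_g _] [d g_hom]] base.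
have d_gt0 : (0 < d)%N.
  rewrite lt0n; apply: contraTneq size_g => d0; rewrite -leqNgt msizeE.
  by apply/bigmax_leqP_seq => m m_supp _; rewrite (dhomog_mf g_hom m_supp) d0.
have [s [t [st gx]]] := homog_zero_line01 g_hom d_gt0.
have memb0 f : in_linsys p f -> f.@[line01 s t] = 0.
  by case/base => h ->; rewrite mevalM gx mul0r.
apply: (members_no_common_zero_line01 gen st).
by split; [rewrite -meval_F1 | rewrite -meval_F2 | rewrite -meval_F3 | rewrite -meval_F4];
  apply: memb0; [exact: F1_in_linsys | exact: F2_in_linsys | exact: F3_in_linsys
                | exact: F4_in_linsys].
Qed.

Lemma movable_of_generic : movable p.
Proof.
have two_neq0 : 2%:R != 0 :> F by rewrite pnatr_eq0.
case=> [g | i | i j] /=.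
- exact: strict_not_in_base_locus.
- by move=> _; exact: exc_pt_not_in_base_locus.
- exact: exc_line_not_in_base_locus.
Qed.

End Movable.

(** * Very general points *)

Definition int_config (i : 'I_6) (c : 'I_4) : int :=
  (nth 0 (nth [::] [:: [:: 0; 3; 2; 2]; [:: 2; 1; 1; 1]; [:: 3; 1; 0; 3];
                      [:: 2; 2; 2; 0]; [:: 2; 2; 0; 1]; [:: 1; 2; 1; 2]] i) c)%:Z.

(* Integers are unary here, so the conditions are evaluated modulo 11. *)
Lemma int_config_mod11_generic :
  all (fun y => y != 0) (gen_conds (fun i c => (int_config i c)%:~R : 'Z_11)).
Proof. by vm_compute. Qed.

Lemma coord_index_subproof (i : 'I_6) (c : 'I_4) : (4 * i + c < 24)%N.
Proof. have := ltn_ord i; have := ltn_ord c; lia. Qed.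

Definition coord_index (i : 'I_6) (c : 'I_4) : 'I_24 := Ordinal (coord_index_subproof i c).

Lemma coords_index (K : fieldType) (p : 'I_6 -> 'I_4 -> K) i c :
  coords p (coord_index i c) = p i c.
Proof.
rewrite /coords /=.
have -> : ((4 * i + c) %/ 4 = i)%N by have := ltn_ord c; lia.
have -> : ((4 * i + c) %% 4 = c)%N by have := ltn_ord c; lia.
by rewrite !inord_val.
Qed.

Section GenericityPolynomials.
Variable R : realType.

Definition coord_var (i : 'I_6) (c : 'I_4) : {mpoly R[i][24]} := 'X_(coord_index i c).

Definition gen_poly (k : nat) := nth 1 (gen_conds coord_var) k.

Lemma meval_gen_poly p k : (gen_poly k).@[coords p] = nth 1 (gen_conds p) k.
Proof.
rewrite /gen_poly (rmorph_nth (meval (coords p) : {rmorphism _ -> _})) map_gen_conds.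
by congr (nth _ (gen_conds _) _); do 2!apply: boolp.funext => ? /=;
  rewrite mevalXU coords_index.
Qed.

Lemma gen_poly_neq0 k : gen_poly k != 0.
Proof.
have cfg_k_neq0 : (nth 1 (gen_conds int_config) k)%:~R != 0 :> 'Z_11.
  rewrite (rmorph_nth (intr : {rmorphism int -> 'Z_11})) map_gen_conds.
  set conds11 := gen_conds _.
  have [lt_k | ge_k] := ltnP k (size conds11).
    exact: (all_nthP 1 int_config_mod11_generic).
  by rewrite nth_default ?oner_neq0.
apply: contraNneq cfg_k_neq0 => gen_k0.
suff -> : nth 1 (gen_conds int_config) k = 0 by rewrite rmorph0.
apply/eqP; rewrite -(intr_eq0 R[i]) (rmorph_nth (intr : {rmorphism int -> R[i]})).
by rewrite map_gen_conds -meval_gen_poly gen_k0 meval0.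
Qed.

End GenericityPolynomials.

Theorem lemma3p7 (R : realType) :
  exists Z : nat -> {mpoly R[i][24]},
    (forall k, Z k != 0) /\
    forall p : 'I_6 -> 'I_4 -> R[i],
      (forall i, exists c, p i c != 0) ->
      (forall k, (Z k).@[coords p] != 0) ->
      movable p.
Proof.
exists (@gen_poly R); split; first exact: gen_poly_neq0.
move=> p _ Zp_neq0; apply/movable_of_generic/generic_gen_conds.
by apply/(all_nthP 1) => k _; rewrite -meval_gen_poly.
Qed.
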